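(* In any execution of $\mathcal{U}$, if an operation $o$ is done at time $T$, then for all times $T' \geq T$, $h(o) \neq (t(o), NULL)$ at $T'$.
   Context: Model: an asynchronous shared-memory system with possibly infinitely many processes, any of which may crash, communicating via atomic shared objects. A fetch-and-increment (F\&I) object stores an integer; F\&I$(C)$ atomically returns the current value and increments it. A generalized-compare-and-swap (GCAS) object $O$ stores a value and supports Read$(O)$ and GCAS$(c, O, v_1, v_2)$, which atomically does: if $c(\text{current value of } O, v_1)$ holds then set $O := v_2$ and return true, else return false. Tuples are compared componentwise for $=$; GCAS$(>, A, (t,-,-), v)$ succeeds iff the time field of $A$ is strictly greater than $t$. Implemented type $\mathcal{T} = (OP, RES, Q, \delta)$ with initial state $s_0$; a procedure $apply_{\mathcal{T}}(o,s)$ returns some $(s',r)$ with $(s,o,s',r)\in\delta$. $NULL$ is a value different from every response of $\mathcal{T}$, and $NOOP$ is a name different from every operation of $\mathcal{T}$. Algorithm $\mathcal{U}$: each process $p$ owns a GCAS object $H_p$ with fields $(time, response)$. Shared objects: F\&I object $C$, initially $1$; GCAS object $A$ with fields $(time, op, ptr)$, initially $(0, NOOP, h(NOOP))$, where $h(NOOP)$ is a pointer to an immutable location containing $(0,\perp)$; GCAS object $S$ with fields $(time, state, response, ptr)$, initially $(0, s_0, \perp, h(NOOP))$. Process $p$ performs operation $o$ by calling DoOp$(o)$: (1) DoOp$(o)$ invoked; (2) $t := $ F\&I$(C)$; (3) $H_p := (t, NULL)$; (4) while $H_p = (t, NULL)$ do: (5) $(t^*, s^*, r^*, roptr^* ) :=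 S$; (6) GCAS$(=, *roptr^*, (t^*, NULL), (t^*, r^* ))$; (7) GCAS$(>, A, (t,-,-), (t, o, \&H_p))$; (8) $(t', o', roptr') := A$; (9) $(\hat t, \hat r) := *roptr'$; (10) if $(\hat t,\hat r) = (t', NULL)$ then (11) $(s', r') := apply_{\mathcal{T}}(o', s^* )$; (12) GCAS$(=, S, (t^*,s^*,r^*,roptr^* ), (t', s', r', roptr'))$; (13) else GCAS$(=, A, (t', o', roptr'), (t, o, \&H_p))$; end while; (14) return $H_p.response$. Notation: an ''operation'' $o$ means one invocation of DoOp$(o)$. $p(o)$ is the process executing it; $t(o)$ is the value returned by its F\&I at line 2, or $\infty$ if line 2 has not been executed; $h(o)$ is $H_{p(o)}$. Operation $o$ is done at time $T$ if at some time $T'\le T$, $h(o) = (t(o), r)$ with $r \neq NULL$. *)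

(* Operational model of algorithm U (asynchronous shared memory,
   infinitely many processes indexed by nat, each numbered line = one atomic step). *)
From Stdlib Require Import Arith.

Section AlgorithmU.

(* Implemented type T = (OP, RES, Q, delta); delta s o s' r means (s,o,s',r) \in delta. *)
Variables (OP RES Q : Type).
Variable delta : Q -> OP -> Q -> RES -> Prop.
Variable s0 : Q.

Inductive resp := RNull | RBot | RVal (r : RES).

(* Pointers: h(NOOP) (immutable location holding (0, bot)) or &H_q. *)
Inductive ptr := PNoop | PH (q : nat).

(* A = (time, op, ptr), op = None encodes NOOP. *)
Definition Aval := (nat * option OP * ptr)%type.
(* S = (time, state, response, ptr). *)
Definition Sval := (nat * Q * resp * ptr)%type.
(* H_p = (time, response). *)
Definition Hval := (nat * resp)%type.

(* Local state of a process: Idle (no pending DoOp), or "about to execute line k"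
   together with the live local variables. *)
Inductive lstate :=
 | Idle
 | At2 (o : OP)
 | At3 (o : OP) (t : nat)
 | At4 (o : OP) (t : nat)
 | At5 (o : OP) (t : nat)
 | At6 (o : OP) (t : nat) (sv : Sval)
 | At7 (o : OP) (t : nat) (sv : Sval)
 | At8 (o : OP) (t : nat) (sv : Sval)
 | At9 (o : OP) (t : nat) (sv : Sval) (av : Aval)
 | At10 (o : OP) (t : nat) (sv : Sval) (av : Aval) (hv : Hval)
 | At11 (o : OP) (t : nat) (sv : Sval) (av : Aval)
 | At12 (o : OP) (t : nat) (sv : Sval) (av : Aval) (s' : Q) (r' : RES)
 | At13 (o : OP) (t : nat) (sv : Sval) (av : Aval)
 | At14 (o : OP) (t : nat).

Record config := mkConfig {
  cC : nat;               (* F&I object C *)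
  cA : Aval;              (* GCAS object A *)
  cS : Sval;              (* GCAS object S *)
  cH : nat -> Hval;
  cL : nat -> lstate
}.

Definition updf {X : Type} (f : nat -> X) (q : nat) (v : X) : nat -> X :=
  fun x => if Nat.eqb x q then v else f x.

(* Initial configuration.  H_p is initially (0, bot) (not fixed by the paper). *)
Definition init_config : config :=
  mkConfig 1 (0, None, PNoop) (0, s0, RBot, PNoop) (fun _ => (0, RBot)) (fun _ => Idle).

Definition deref (H : nat -> Hval) (pt : ptr) : Hval :=
  match pt with PNoop => (0, RBot) | PH q => H q end.

(* GCAS(=, *pt, old, new): H' is the resulting array of H objects.
   h(NOOP) is immutable, so a GCAS on it never changes anything. *)
Definition gcas_ptr (H : nat -> Hval) (pt : ptr) (old new : Hval)
  (H' : nat -> Hval) : Prop :=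
  match pt with
  | PNoop => H' = H
  | PH q => (H q = old /\ H' = updf H q new) \/ (H q <> old /\ H' = H)
  end.

Definition setL (c : config) (p : nat) (l : lstate) : config :=
  mkConfig (cC c) (cA c) (cS c) (cH c) (updf (cL c) p l).

Inductive step : config -> nat -> config -> Prop :=
 | step1 c p o : cL c p = Idle ->
     step c p (setL c p (At2 o))
 | step2 c p o : cL c p = At2 o ->
     step c p (mkConfig (S (cC c)) (cA c) (cS c) (cH c) (updf (cL c) p (At3 o (cC c))))
 | step3 c p o t : cL c p = At3 o t ->
     step c p (mkConfig (cC c) (cA c) (cS c) (updf (cH c) p (t, RNull)) (updf (cL c) p (At4 o t)))
 | step4_loop c p o t : cL c p = At4 o t -> cH c p = (t, RNull) ->
     step c p (setL c p (At5 o t))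
 | step4_exit c p o t : cL c p = At4 o t -> cH c p <> (t, RNull) ->
     step c p (setL c p (At14 o t))
 | step5 c p o t : cL c p = At5 o t ->
     step c p (setL c p (At6 o t (cS c)))
 | step6 c p o t ts ss rs ps H' : cL c p = At6 o t (ts, ss, rs, ps) ->
     gcas_ptr (cH c) ps (ts, RNull) (ts, rs) H' ->
     step c p (mkConfig (cC c) (cA c) (cS c) H' (updf (cL c) p (At7 o t (ts, ss, rs, ps))))
 | step7_succ c p o t sv ta oa pa : cL c p = At7 o t sv -> cA c = (ta, oa, pa) -> ta > t ->
     step c p (mkConfig (cC c) (t, Some o, PH p) (cS c) (cH c) (updf (cL c) p (At8 o t sv)))
 | step7_fail c p o t sv ta oa pa : cL c p = At7 o t sv -> cA c = (ta, oa, pa) -> ~ ta > t ->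
     step c p (setL c p (At8 o t sv))
 | step8 c p o t sv : cL c p = At8 o t sv ->
     step c p (setL c p (At9 o t sv (cA c)))
 | step9 c p o t sv t' o' p' : cL c p = At9 o t sv (t', o', p') ->
     step c p (setL c p (At10 o t sv (t', o', p') (deref (cH c) p')))
 | step10_then c p o t sv t' o' p' hv : cL c p = At10 o t sv (t', o', p') hv ->
     hv = (t', RNull) ->
     step c p (setL c p (At11 o t sv (t', o', p')))
 | step10_else c p o t sv t' o' p' hv : cL c p = At10 o t sv (t', o', p') hv ->
     hv <> (t', RNull) ->
     step c p (setL c p (At13 o t sv (t', o', p')))
 (* line 11: apply_T(o', s_star) returns some (s', r') with (s_star, o', s', r') in delta *)
 | step11 c p o t ts ss rs ps t' o'' p' s' r' :
     cL c p = At11 o t (ts, ss, rs, ps) (t', Some o'', p') ->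
     delta ss o'' s' r' ->
     step c p (setL c p (At12 o t (ts, ss, rs, ps) (t', Some o'', p') s' r'))
 | step12_succ c p o t sv t' o' p' s' r' : cL c p = At12 o t sv (t', o', p') s' r' ->
     cS c = sv ->
     step c p (mkConfig (cC c) (cA c) (t', s', RVal r', p') (cH c) (updf (cL c) p (At4 o t)))
 | step12_fail c p o t sv t' o' p' s' r' : cL c p = At12 o t sv (t', o', p') s' r' ->
     cS c <> sv ->
     step c p (setL c p (At4 o t))
 | step13_succ c p o t sv av : cL c p = At13 o t sv av -> cA c = av ->
     step c p (mkConfig (cC c) (t, Some o, PH p) (cS c) (cH c) (updf (cL c) p (At4 o t)))
 | step13_fail c p o t sv av : cL c p = At13 o t sv av -> cA c <> av ->
     step c p (setL c p (At4 o t))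
 (* line 14: return H_p.response *)
 | step14 c p o t : cL c p = At14 o t ->
     step c p (setL c p Idle).

(* An execution: arbitrary interleaving of atomic steps from the initial
   configuration; stuttering allows finite executions and crashes. *)
Definition execution (E : nat -> config) : Prop :=
  E 0 = init_config /\
  forall n, (exists p, step (E n) p (E (S n))) \/ E (S n) = E n.

(* The operation o of process p executes line 2 (F&I) between times n and n+1,
   obtaining t = t(o). *)
Definition fai_event (E : nat -> config) (p n : nat) (o : OP) (t : nat) : Prop :=
  cL (E n) p = At2 o /\ cL (E (S n)) p = At3 o t.

(* The operation with process p and t(o) = t is done at time T. *)
Definition done (E : nat -> config) (p t T : nat) : Prop :=
  exists T', T' <= T /\ exists r, cH (E T') p = (t, r) /\ r <> RNull.

End AlgorithmU.

Arguments RNull {RES}.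
Arguments RBot {RES}.
Arguments RVal {RES} r.
Arguments cH {OP RES Q} c _.
Arguments execution {OP RES Q} delta s0 E.
Arguments fai_event {OP RES Q} E p n o t.
Arguments done {OP RES Q} E p t T.

(* Outside H_p's own initialisation at line 3, a GCAS can only store NULL in
   some H_q at line 6, copying the response field of a snapshot of S; S never holds
   NULL, so neither do the snapshots.  Line 3 writes (t', NULL) only with the
   counter value t' its process drew from C, which exceeds every time stamp stored
   so far.  Hence once h(o) = (t(o), r) with r <> NULL, the pending line-3 writes
   of p carry a time stamp other than t(o), later ones draw a larger one, and
   h(o) = (t(o), NULL) never reappears. *)
From Stdlib Require Import Arith Lia.

Local Arguments cC {OP RES Q} c.
Local Arguments cS {OP RES Q} c.
Local Arguments cL {OP RES Q} c _.
Local Arguments At2 {OP RES Q} o.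
Local Arguments At3 {OP RES Q} o t.
Local Arguments At4 {OP RES Q} o t.
Local Arguments At6 {OP RES Q} o t sv.

Lemma updf_eq {X : Type} (f : nat -> X) (q : nat) (v : X) : updf f q v q = v.
Proof. unfold updf; rewrite Nat.eqb_refl; reflexivity. Qed.

Lemma updf_neq {X : Type} (f : nat -> X) (q : nat) (v : X) (x : nat) :
  x <> q -> updf f q v x = f x.
Proof. intro Hx; unfold updf; destruct (Nat.eqb_spec x q); congruence. Qed.

Section AlgorithmUInvariants.

Variables (OP RES Q : Type) (delta : Q -> OP -> Q -> RES -> Prop) (s0 : Q).

Notation config := (config OP RES Q).
Notation step := (step OP RES Q delta).

Lemma execution_invariant (E : nat -> config) (P : config -> Prop) (m0 : nat) :
  execution delta s0 E ->
  (forall m q, m0 <= m -> P (E m) -> step (E m) q (E (S m)) -> P (E (S m))) ->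
  P (E m0) -> forall m, m0 <= m -> P (E m).
Proof.
  intros [_ Hsteps] Hpres H0 m Hm; induction Hm as [|m Hm IH]; [exact H0|].
  destruct (Hsteps m) as [[q St]|Hstutter].
  - exact (Hpres m q Hm IH St).
  - rewrite Hstutter; exact IH.
Qed.

Lemma step_cC_le c p c' : step c p c' -> cC c <= cC c'.
Proof. intro St; destruct St; unfold setL; simpl; lia. Qed.

Lemma step_cL_other c p c' x : step c p c' -> x <> p -> cL c' x = cL c x.
Proof. intros St Hx; destruct St; unfold setL; simpl; apply updf_neq; exact Hx. Qed.

Lemma step_cS_cases c p c' :
  step c p c' -> cS c' = cS c \/ exists ts ss r ps, cS c' = (ts, ss, RVal r, ps).
Proof. intro St; destruct St; unfold setL; simpl; eauto 6. Qed.

Lemma step_cH_cases c p c' x : step c p c' ->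
  cH c' x = cH c x \/
  (x = p /\ exists o t, cL c p = At3 o t /\ cL c' p = At4 o t /\ cH c' p = (t, RNull)) \/
  (exists o t ts ss rs ps, cL c p = At6 o t (ts, ss, rs, ps) /\
     fst (cH c x) = ts /\ cH c' x = (ts, rs)).
Proof.
  intro St; destruct St as [| | c p o t Hl | | | | c p o t ts ss rs ps H' Hl Hgcas | | | | | | | | | | | |];
    unfold setL; simpl; auto.
  - destruct (Nat.eq_dec x p) as [->|Hx].
    + right; left; split; [reflexivity|]. exists o, t; rewrite !updf_eq; auto.
    + left; apply updf_neq; exact Hx.
  - destruct ps as [|q]; simpl in Hgcas; [subst; auto|].
    destruct Hgcas as [[Hold ->]|[_ ->]]; [|auto].
    destruct (Nat.eq_dec x q) as [->|Hx].
    + right; right. exists o, t, ts, ss, rs, (PH q). rewrite Hold, updf_eq; auto.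
    + left; apply updf_neq; exact Hx.
Qed.

Lemma step_At3_origin c p c' x o t : step c p c' -> cL c' x = At3 o t ->
  cL c x = At3 o t \/ (x = p /\ cL c p = At2 o /\ t = cC c /\ cC c' = S (cC c)).
Proof.
  intros St Hl.
  destruct (Nat.eq_dec x p) as [->|Hx].
  2:{ left; rewrite <- (step_cL_other _ _ _ _ St Hx); exact Hl. }
  destruct St; unfold setL in *; simpl in *; rewrite updf_eq in Hl; try discriminate;
    injection Hl; intros; subst; auto.
Qed.

Lemma step_At6_origin c p c' x o t sv : step c p c' -> cL c' x = At6 o t sv ->
  cL c x = At6 o t sv \/ sv = cS c.
Proof.
  intros St Hl.
  destruct (Nat.eq_dec x p) as [->|Hx].
  2:{ left; rewrite <- (step_cL_other _ _ _ _ St Hx); exact Hl. }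
  destruct St; unfold setL in *; simpl in *; rewrite updf_eq in Hl; try discriminate;
    injection Hl; intros; subst; auto.
Qed.

Record invariant (c : config) : Prop := {
  inv_cS_resp : forall ts ss ps, cS c <> (ts, ss, RNull, ps);
  inv_At6_resp : forall q o t ts ss rs ps,
    cL c q = At6 o t (ts, ss, rs, ps) -> rs <> RNull;
  inv_cH_time : forall q, fst (cH c q) < cC c;
  inv_At3_time : forall q o t, cL c q = At3 o t -> fst (cH c q) < t < cC c
}.

Lemma invariant_init : invariant (init_config OP RES Q s0).
Proof. split; simpl; try discriminate; intros; lia. Qed.

Lemma invariant_step c p c' : invariant c -> step c p c' -> invariant c'.
Proof.
  intros [HS H6 HH H3] St.
  pose proof (step_cC_le _ _ _ St) as HC.
  split.
  - intros ts ss ps Hc'.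
    destruct (step_cS_cases _ _ _ St) as [Heq|[ts' [ss' [r [ps' Heq]]]]];
      rewrite Heq in Hc'; [exact (HS _ _ _ Hc')|discriminate].
  - intros q o t ts ss rs ps Hl.
    destruct (step_At6_origin _ _ _ _ _ _ _ St Hl) as [Hl0|Hsv]; [exact (H6 _ _ _ _ _ _ _ Hl0)|].
    intros ->; exact (HS ts ss ps (eq_sym Hsv)).
  - intro q.
    destruct (step_cH_cases _ _ _ q St) as [Heq|[[-> [o [t [Hl [_ Heq]]]]]|[o [t [ts [ss [rs [ps [_ [Hts Heq]]]]]]]]]];
      rewrite Heq; simpl.
    + specialize (HH q); lia.
    + specialize (H3 _ _ _ Hl); lia.
    + specialize (HH q); lia.
  - intros q o t Hl.
    destruct (step_At3_origin _ _ _ _ _ _ St Hl) as [Hl0|[-> [Hl0 [-> HCS]]]].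
    + specialize (H3 _ _ _ Hl0).
      destruct (step_cH_cases _ _ _ q St) as [Heq|[[-> [o' [t' [_ [Hl4 _]]]]]|[o' [t' [ts [ss [rs [ps [_ [Hts Heq]]]]]]]]]].
      * rewrite Heq; lia.
      * congruence.
      * rewrite Heq; simpl; lia.
    + specialize (HH p).
      destruct (step_cH_cases _ _ _ p St) as [Heq|[[_ [o' [t' [Hl' _]]]]|[o' [t' [ts [ss [rs [ps [Hl' _]]]]]]]]];
        [rewrite Heq; lia|congruence|congruence].
Qed.

Lemma execution_invariant_all (E : nat -> config) :
  execution delta s0 E -> forall m, invariant (E m).
Proof.
  intros Ex m.
  apply (execution_invariant E invariant 0); [exact Ex| | |lia].
  - intros m' q _ Hinv St; exact (invariant_step _ _ _ Hinv St).
  - destruct Ex as [-> _]; exact invariant_init.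
Qed.

Record settled (p t : nat) (c : config) : Prop := {
  settled_cH : cH c p <> (t, RNull);
  settled_not_At3 : forall o, cL c p <> At3 o t;
  settled_time : t < cC c
}.

Lemma settled_of_response c p t r :
  invariant c -> cH c p = (t, r) -> r <> RNull -> settled p t c.
Proof.
  intros Hinv Hh Hr; split.
  - rewrite Hh; congruence.
  - intros o Hl. pose proof (inv_At3_time _ Hinv _ _ _ Hl) as Ht. rewrite Hh in Ht; simpl in Ht; lia.
  - pose proof (inv_cH_time _ Hinv p) as Ht. rewrite Hh in Ht; exact Ht.
Qed.

Lemma settled_step c q c' p t :
  invariant c -> settled p t c -> step c q c' -> settled p t c'.
Proof.
  intros Hinv [Hh HnA3 Ht] St.
  pose proof (step_cC_le _ _ _ St) as HC.
  split; [|intros o Hl|lia].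
  - destruct (step_cH_cases _ _ _ p St) as [Heq|[[-> [o [t' [Hl [_ Heq]]]]]|[o [t' [ts [ss [rs [ps [Hl [_ Heq]]]]]]]]]];
      rewrite Heq; [exact Hh| |].
    + intro Hw; injection Hw as ->; exact (HnA3 o Hl).
    + intro Hw; injection Hw as -> ->; exact (inv_At6_resp _ Hinv _ _ _ _ _ _ _ Hl eq_refl).
  - destruct (step_At3_origin _ _ _ _ _ _ St Hl) as [Hl0|[_ [_ [-> _]]]]; [exact (HnA3 o Hl0)|lia].
Qed.

End AlgorithmUInvariants.

Theorem mainTheorem10 (OP RES Q : Type) (delta : Q -> OP -> Q -> RES -> Prop) (s0 : Q)
  (E : nat -> config OP RES Q) (p n : nat) (o : OP) (t T : nat) :
  execution delta s0 E ->
  fai_event E p n o t ->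
  done E p t T ->
  forall T', T <= T' -> cH (E T') p <> (t, RNull).
Proof.
  intros Ex _ [T0 [HT0 [r [Hh Hr]]]] T' HT'.
  pose proof (execution_invariant_all _ _ _ _ _ _ Ex) as Hinv.
  apply (execution_invariant _ _ _ delta s0 E (settled _ _ _ p t) T0); [exact Ex| | |lia].
  - intros m q _ Hs St; exact (settled_step _ _ _ _ _ _ _ _ _ (Hinv m) Hs St).
  - exact (settled_of_response _ _ _ _ _ _ _ (Hinv T0) Hh Hr).
Qed.
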